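(* Let $V$ be a real vector space with a symplectic form $\sigma$, $\mu$ a finitely additive probability measure on the lattice $\mathcal{L}(V)$ of all linear subspaces of $V$, and $K,H\in\mathcal{L}(V)$ symplectic planes. Then $\mu(K)=\mu(H)$.
   Context: A symplectic form is a bilinear, antisymmetric, non-degenerate map $\sigma:V\times V\to\mathbb{R}$. For a subspace $H$, $H'=\{v\in V:\sigma(v,h)=0\ \forall h\in H\}$. $\mathcal{L}(V)$ is ordered by inclusion, with $H\vee K=H+K$, $H\wedge K=H\cap K$, $0=\{0\}$, $1=V$. $H,K$ are separated if $H\subset K'$. A symplectic plane is a two-dimensional subspace $H$ with $H\cap H'=\{0\}$. A finitely additive probability measure on $\mathcal{L}(V)$ is a map $\mu$ into $[0,1]$ with $\mu(\{0\})=0$, $\mu(V)=1$, monotone, and $\mu(H_1+\dots+H_n)=\sum_k\mu(H_k)$ whenever $H_1,\dots,H_n$ are pairwise separated. *)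

From HB Require Import structures.
From mathcomp Require Import all_boot all_order all_algebra.
From mathcomp Require Import boolp classical_sets reals.
Set Implicit Arguments. Unset Strict Implicit. Unset Printing Implicit Defensive.
Import Order.TTheory GRing.Theory Num.Theory.
Local Open Scope ring_scope.
Local Open Scope classical_set_scope.

Section Symplectic.
Variables (R : realType) (V : lmodType R).

Definition symplectic_form (s : V -> V -> R) : Prop :=
  [/\ (forall (a : R) (u v w : V), s (a *: u + v) w = a * s u w + s v w),
      (forall (a : R) (u v w : V), s w (a *: u + v) = a * s w u + s w v),
      (forall u v : V, s u v = - s v u) &
      (forall u : V, (forall v : V, s u v = 0) -> u = 0)].

Definition subspace (H : set V) : Prop :=
  H 0 /\ forall (a : R) (u v : V), H u -> H v -> H (a *: u + v).

Definition orth (s : V -> V -> R) (H : set V) : set V :=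
  [set v | forall h, H h -> s v h = 0].

Definition separated (s : V -> V -> R) (H K : set V) : Prop := H `<=` orth s K.

Definition sumsp (H K : set V) : set V :=
  [set v | exists h k, [/\ H h, K k & v = h + k]].

Definition bigsumsp (l : seq (set V)) : set V := foldr sumsp [set 0] l.

Definition two_dim (H : set V) : Prop :=
  exists u w : V,
    (forall a b : R, a *: u + b *: w = 0 -> a = 0 /\ b = 0) /\
    H = [set v | exists a b : R, v = a *: u + b *: w].

Definition symplectic_plane (s : V -> V -> R) (H : set V) : Prop :=
  subspace H /\ two_dim H /\ H `&` orth s H = [set 0].

(* finitely additive probability measure on L(V); mu is only constrained
   on subspaces (its values on other sets are irrelevant). *)
Definition fa_prob_measure (s : V -> V -> R) (mu : set V -> R) : Prop :=
  [/\ (forall H, subspace H -> 0 <= mu H <= 1),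
      mu [set 0] = 0,
      mu [set: V] = 1,
      (forall H K, subspace H -> subspace K -> H `<=` K -> mu H <= mu K) &
      (forall l : seq (set V),
          (forall i, (i < size l)%N -> subspace (nth set0 l i)) ->
          (forall i j, (i < size l)%N -> (j < size l)%N -> i <> j ->
              separated s (nth set0 l i) (nth set0 l j)) ->
          mu (bigsumsp l) = \sum_(H <- l) mu H)].

End Symplectic.

(* Write a symplectic plane as span(u, p) with s u p <> 0.  If also s u q <> 0,
   the vector r = -s(p,q) u + s(u,q) p - s(u,p) q is s-orthogonal to u, p and q,
   and span(u, p, q) splits into the separated sum of span(r) with span(u, p),
   and equally of span(r) with span(u, q).  Additivity of mu therefore gives
   mu span(u, p) = mu span(u, q): a plane may exchange one generator for any
   vector not s-orthogonal to the other one.  Three such exchanges,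
   span(e, f) -> span(e, y) -> span(y, h) -> span(h, g) with y = f + l g for a
   suitable scalar l, turn one symplectic plane into the other. *)

From HB Require Import structures.
From mathcomp Require Import all_boot all_order all_algebra.
From mathcomp Require Import boolp classical_sets reals.
From mathcomp Require Import ring lra.
Import Order.TTheory GRing.Theory Num.Theory.
Local Open Scope ring_scope.
Local Open Scope classical_set_scope.
Set Implicit Arguments. Unset Strict Implicit.

Lemma exists_common_nonroot_affine (F : realFieldType) (c a d' d : F) : c != 0 -> d != 0 ->
  exists l, c + l * a != 0 /\ d' + l * d != 0.
Proof.
move=> c_neq0 d_neq0.
have [->|d'_neq0] := eqVneq d' 0; last by exists 0; rewrite !mul0r !addr0.
have [ca0|ca_neq0] := eqVneq (c + a) 0; last by exists 1; rewrite !mul1r add0r.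
exists 2; split; [apply: contra_neq c_neq0 | apply: contra_neq d_neq0]; lra.
Qed.

Section Spans.
Variables (R : realType) (V : lmodType R).

Definition span2 (u v : V) : set V := [set x | exists a b : R, x = a *: u + b *: v].

Definition lincomb3 (u p q : V) (a b c : R) : V := a *: u + b *: p + c *: q.

Definition span3 (u p q : V) : set V :=
  [set x | exists a b c, x = lincomb3 u p q a b c].

Lemma lincomb3D u p q a b c a' b' c' :
  lincomb3 u p q a b c + lincomb3 u p q a' b' c' =
  lincomb3 u p q (a + a') (b + b') (c + c').
Proof. by rewrite /lincomb3 addrACA [X in X + _ = _]addrACA !scalerDl. Qed.

Lemma lincomb3Z u p q k a b c :
  k *: lincomb3 u p q a b c = lincomb3 u p q (k * a) (k * b) (k * c).
Proof. by rewrite /lincomb3 !scalerDr !scalerA. Qed.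

Lemma lincomb3_span2 u p q a b : a *: u + b *: p = lincomb3 u p q a b 0.
Proof. by rewrite /lincomb3 scale0r addr0. Qed.

Lemma lincomb3C23 u p q a b c : lincomb3 u p q a b c = lincomb3 u q p a c b.
Proof. by rewrite /lincomb3 addrAC. Qed.

Lemma span3C23 u p q : span3 u q p = span3 u p q.
Proof.
by apply/seteqP; split=> x [a [b [c ->]]]; exists a, c, b; rewrite lincomb3C23.
Qed.

Lemma span2C u v : span2 u v = span2 v u.
Proof. by apply/seteqP; split=> x [a [b ->]]; exists b, a; rewrite addrC. Qed.

Lemma span2_subspace u v : subspace (span2 u v).
Proof.
split; first by exists 0, 0; rewrite !scale0r addr0.
move=> k x y [a [b ->]] [a' [b' ->]]; exists (k * a + a'), (k * b + b').
rewrite !(lincomb3_span2 _ _ u) lincomb3Z lincomb3D; congr lincomb3; ring.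
Qed.

Lemma sumsp0 (H : set V) : sumsp H [set 0] = H.
Proof.
apply/seteqP; split=> [x [h [_ [Hh -> ->]]]|x Hx]; first by rewrite addr0.
by exists x, 0; rewrite addr0.
Qed.

(* Eliminating q through r (x3 <> 0) shows that span(r) + span(u, p) contains q. *)
Lemma sumsp_span2_line u p q r (x1 x2 x3 : R) :
  x3 != 0 -> r = lincomb3 u p q x1 x2 x3 ->
  sumsp (span2 r r) (span2 u p) = span3 u p q.
Proof.
move=> x3_neq0 def_r; apply/seteqP; split=> x.
  case=> _ [_ [[c [c' ->]] [d [d' ->]] ->]].
  rewrite def_r (lincomb3_span2 u p q d) !lincomb3Z !lincomb3D.
  by do 3 eexists.
case=> a [b [c ->]]; pose k := c / x3.
exists (k *: r + 0 *: r), ((a - k * x1) *: u + (b - k * x2) *: p).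
split; [by exists k, 0 | by exists (a - k * x1), (b - k * x2) |].
rewrite scale0r addr0 def_r lincomb3Z (lincomb3_span2 _ _ q) lincomb3D.
by congr lincomb3; rewrite /k; field.
Qed.

End Spans.

Section SymplecticMeasure.
Variables (R : realType) (V : lmodType R) (s : V -> V -> R).
Hypothesis s_symp : symplectic_form s.

Lemma formDl u v w : s (u + v) w = s u w + s v w.
Proof. by case: s_symp => lin _ _ _; have := lin 1 u v w; rewrite scale1r mul1r. Qed.

Lemma formDr u v w : s w (u + v) = s w u + s w v.
Proof. by case: s_symp => _ lin _ _; have := lin 1 u v w; rewrite scale1r mul1r. Qed.

Lemma form0l w : s 0 w = 0.
Proof. have := formDl 0 0 w; rewrite addr0; lra. Qed.

Lemma form0r w : s w 0 = 0.
Proof. have := formDr 0 0 w; rewrite addr0; lra. Qed.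

Lemma formZl a u w : s (a *: u) w = a * s u w.
Proof. by case: s_symp => lin _ _ _; have := lin a u 0 w; rewrite !addr0 form0l addr0. Qed.

Lemma formZr a u w : s w (a *: u) = a * s w u.
Proof. by case: s_symp => _ lin _ _; have := lin a u 0 w; rewrite !addr0 form0r addr0. Qed.

Lemma formC u v : s u v = - s v u.
Proof. by case: s_symp. Qed.

Lemma formxx u : s u u = 0.
Proof. have := formC u u; lra. Qed.

Lemma form_lincomb3l u p q a b c w :
  s (lincomb3 u p q a b c) w = a * s u w + b * s p w + c * s q w.
Proof. by rewrite /lincomb3 !formDl !formZl. Qed.

Lemma separated_sym (H K : set V) : separated s H K -> separated s K H.
Proof. by move=> sepHK k Kk h Hh; rewrite formC (sepHK h Hh k Kk) oppr0. Qed.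

Lemma separated_span2 r u p : s r u = 0 -> s r p = 0 ->
  separated s (span2 r r) (span2 u p).
Proof.
move=> ru0 rp0 _ [c [c' ->]] _ [d [d' ->]].
by rewrite !formDl !formZl !formDr !formZr ru0 rp0; ring.
Qed.

Lemma fa_prob_measureD mu (H K : set V) : fa_prob_measure s mu ->
  subspace H -> subspace K -> separated s H K -> mu (sumsp H K) = mu H + mu K.
Proof.
case=> _ _ _ _ additive subH subK sepHK.
have := additive [:: H; K]; rewrite /bigsumsp /= sumsp0 !big_cons big_nil addr0.
apply; first by case=> [|[|]].
by case=> [|[|i]] [|[|j]] //= _ _ _; apply: separated_sym.
Qed.

Lemma symplectic_plane_span2 K : symplectic_plane s K ->
  exists e f, s e f != 0 /\ K = span2 e f.
Proof.
case=> _ [[u [w [free ->]]] rad0]; exists u, w; split=> //.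
apply/eqP=> uw0.
have : (span2 u w `&` orth s (span2 u w)) u.
  split; first by exists 1, 0; rewrite scale1r scale0r addr0.
  by move=> _ [a [b ->]]; rewrite formDr !formZr formxx uw0; ring.
rewrite rad0 => /= u0.
have [] := free 1 0; first by rewrite scale1r scale0r addr0.
by move/eqP; rewrite oner_eq0.
Qed.

Variables (mu : set V -> R).
Hypothesis mu_prob : fa_prob_measure s mu.

Lemma fa_prob_measure_span3 u p q r x1 x2 x3 :
  s r u = 0 -> s r p = 0 -> x3 != 0 -> r = lincomb3 u p q x1 x2 x3 ->
  mu (span3 u p q) = mu (span2 r r) + mu (span2 u p).
Proof.
move=> ru0 rp0 x3_neq0 def_r.
rewrite -(sumsp_span2_line x3_neq0 def_r) fa_prob_measureD //.
- exact: span2_subspace.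
- exact: span2_subspace.
- exact: separated_span2.
Qed.

Lemma fa_prob_measure_span2_exchange u p q : s u p != 0 -> s u q != 0 ->
  mu (span2 u p) = mu (span2 u q).
Proof.
move=> up_neq0 uq_neq0.
pose r := lincomb3 u p q (- s p q) (s u q) (- s u p).
have ru0 : s r u = 0 by rewrite form_lincomb3l formxx (formC p u) (formC q u); ring.
have rp0 : s r p = 0 by rewrite form_lincomb3l formxx (formC q p); ring.
have rq0 : s r q = 0 by rewrite form_lincomb3l formxx; ring.
have Nup_neq0 : - s u p != 0 by rewrite oppr_eq0.
have := fa_prob_measure_span3 ru0 rp0 Nup_neq0 erefl.
rewrite -span3C23 (fa_prob_measure_span3 ru0 rq0 uq_neq0 (lincomb3C23 _ _ _ _ _ _)).
lra.
Qed.

End SymplecticMeasure.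

Theorem lemmaB2 (R : realType) (V : lmodType R) (s : V -> V -> R)
  (mu : set V -> R) (K H : set V) :
  symplectic_form s -> fa_prob_measure s mu ->
  symplectic_plane s K -> symplectic_plane s H ->
  mu K = mu H.
Proof.
move=> s_symp mu_prob.
move=> /(symplectic_plane_span2 s_symp) [e [f [ef_neq0 ->]]].
move=> /(symplectic_plane_span2 s_symp) [g [h [gh_neq0 ->]]].
have [l [el_neq0 lh_neq0]] := exists_common_nonroot_affine (s e g) (s f h) ef_neq0 gh_neq0.
pose y := f + l *: g.
have ey_neq0 : s e y != 0 by rewrite formDr // formZr.
have yh_neq0 : s y h != 0 by rewrite formDl // formZl.
have exchange := fa_prob_measure_span2_exchange s_symp mu_prob.
have flip (a b : V) : s a b != 0 -> s b a != 0 by rewrite (formC s_symp) oppr_eq0.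
rewrite (exchange _ _ _ ef_neq0 ey_neq0) span2C.
rewrite (exchange _ _ _ (flip _ _ ey_neq0) yh_neq0) span2C.
by rewrite (exchange _ _ _ (flip _ _ yh_neq0) (flip _ _ gh_neq0)) span2C.
Qed.
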